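(* Let $S$ be an additively reduced semidomain and $G$ a torsion-free abelian group. Let $f=\sum_{i=0}^\infty s_ix^{g_i}\in S[\![G]\!]$ with $|\operatorname{supp}(f)|>1$. Then $f$ is irreducible if and only if $f$ is monolithic and $1\in\gcd(\{s_i : i\in\mathbb{N}_0\})$.
   Context: A semidomain is a subsemiring (containing $0$ and $1$) of an integral domain; $S^\times$ is the unit group of the multiplicative monoid $S\setminus\{0\}$. $S$ is additively reduced if $0$ is the only invertible element of $(S,+)$. $G$ carries a fixed total order compatible with addition. $S[\![G]\!]=\{\sum_{i=0}^\infty s_ix^{g_i} : s_i\in S,\ g_i\in G,\ g_i<g_{i+1}\}$ with operations defined as for polynomials; elements are written so that $s_i=0$ implies $s_{i+1}=0$; $\operatorname{supp}(f)=\{g_i: s_i\neq0\}$. $f$ is irreducible if it is nonzero, a nonunit of $S[\![G]\!]$, and $f=pq$ implies $p$ or $q$ is a unit. A nonzero $f$ is monolithic if $f=pq$ with $p,q\in S[\![G]\!]$ implies one of $p,q$ is a monomial $sx^g$. For a set $B$ of elements of $S$, $1\in\gcd(B)$ means $1$ is a greatest common divisor of the nonzero elements of $B$ in the multiplicative monoid $S\setminus\{0\}$, i.e. every common divisor of them is a unit of $S$. *)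

From HB Require Import structures.
From mathcomp Require Import all_boot all_algebra.
Set Implicit Arguments. Unset Strict Implicit. Unset Printing Implicit Defensive.
Import GRing.Theory.
Local Open Scope ring_scope.

(* A semidomain S is represented as a subset S of an integral domain R
   containing 0 and 1 and closed under + and * (hypotheses of the theorem).
   The group G is a zmodType with a strict total order [lt] compatible with +.
   An element of S[[G]] is represented by its coefficient function G -> R. *)

(* c : G -> R is an element of S[[G]]: coefficients in S and
   c = sum_i s_i x^{g_i} with s_i = c (g i), g_i < g_{i+1} (along the nonzero
   prefix), s_i = 0 -> s_{i+1} = 0, and every support point is some g_i. *)
Definition is_series (R : idomainType) (G : zmodType) (S : {pred R})
    (lt : rel G) (c : G -> R) : Prop :=
  (forall x, c x \in S) /\
  exists g : nat -> G,
    (forall i, c (g i.+1) != 0 -> c (g i) != 0 /\ lt (g i) (g i.+1)) /\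
    (forall x, c x != 0 -> exists i, g i = x).

Definition conv_at (R : idomainType) (G : zmodType) (p q : G -> R) (x : G)
    (v : R) : Prop :=
  exists s : seq G, uniq s /\ (forall a, p a * q (x - a) != 0 -> a \in s) /\
    v = \sum_(a <- s) p a * q (x - a).

Definition is_prod (R : idomainType) (G : zmodType) (p q r : G -> R) : Prop :=
  forall x, conv_at p q x (r x).

Definition series_one (R : idomainType) (G : zmodType) : G -> R :=
  fun y => if y == 0 then 1 else 0.

Definition series_unit (R : idomainType) (G : zmodType) (S : {pred R})
    (lt : rel G) (u : G -> R) : Prop :=
  is_series S lt u /\
  exists v, is_series S lt v /\ is_prod u v (@series_one R G).

Definition series_nonzero (R : idomainType) (G : zmodType) (f : G -> R) : Prop :=
  exists x, f x != 0.

Definition is_monomial (R : idomainType) (G : zmodType) (S : {pred R})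
    (p : G -> R) : Prop :=
  exists (s : R) (g : G), s \in S /\ forall y, p y = if y == g then s else 0.

Definition series_irreducible (R : idomainType) (G : zmodType) (S : {pred R})
    (lt : rel G) (f : G -> R) : Prop :=
  series_nonzero f /\ ~ series_unit S lt f /\
  forall p q, is_series S lt p -> is_series S lt q -> is_prod p q f ->
    series_unit S lt p \/ series_unit S lt q.

Definition monolithic (R : idomainType) (G : zmodType) (S : {pred R})
    (lt : rel G) (f : G -> R) : Prop :=
  series_nonzero f /\
  forall p q, is_series S lt p -> is_series S lt q -> is_prod p q f ->
    is_monomial S p \/ is_monomial S q.

Definition sdvd (R : idomainType) (S : {pred R}) (d a : R) : Prop :=
  exists e, e \in S /\ e != 0 /\ a = d * e.

Definition sunit (R : idomainType) (S : {pred R}) (d : R) : Prop :=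
  d \in S /\ d != 0 /\ exists e, e \in S /\ d * e = 1.

(* 1 is a gcd of the nonzero coefficients of f in S \ {0} *)
Definition one_in_gcd_coeffs (R : idomainType) (G : zmodType) (S : {pred R})
    (f : G -> R) : Prop :=
  forall d, d \in S -> d != 0 ->
    (forall x, f x != 0 -> sdvd S d (f x)) -> sunit S d.

From HB Require Import structures.
From mathcomp Require Import all_boot all_algebra.
Set Implicit Arguments. Unset Strict Implicit. Unset Printing Implicit Defensive.
Import GRing.Theory.
Local Open Scope ring_scope.

(* Units of S[[G]] are monomials: if u v = 1, every product u_a v_b with
   a + b <> 0 is a term of a sum of elements of S that equals 0, hence vanishes
   by additive reducedness, so u has a one-point support.  Irreducible therefore
   implies monolithic, and a common divisor d of the coefficients splits f as
   (d x^0) h with h not a monomial (f has two support points), so d is a unit.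
   Conversely, the coefficient s of a monomial factor s x^g of f divides every
   coefficient of f, so s, hence s x^g, is a unit. *)

Section MonomialSeries.

Variables (R : idomainType) (G : zmodType).

Definition monom (s : R) (g : G) : G -> R := fun y => if y == g then s else 0.

Lemma eq_conv_at (p p' q q' : G -> R) x w :
  p =1 p' -> q =1 q' -> conv_at p q x w -> conv_at p' q' x w.
Proof.
move=> ep eq [s [us [Hs ->]]]; exists s; split=> //; split=> [a|].
  by rewrite -ep -eq; apply: Hs.
by apply: eq_bigr => a _; rewrite ep eq.
Qed.

Lemma conv_atC (p q : G -> R) x w : conv_at p q x w -> conv_at q p x w.
Proof.
move=> [s [us [Hs ->]]]; exists [seq x - a | a <- s].
split; first by rewrite (map_inj_uniq (can_inj (subKr x))).
split=> [b|]; last by rewrite big_map; apply: eq_bigr => a _; rewrite subKr mulrC.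
by rewrite mulrC -[in q b](subKr x b) => /Hs /(map_f (fun a => x - a)); rewrite subKr.
Qed.

Lemma is_prodC (p q r : G -> R) : is_prod p q r -> is_prod q p r.
Proof. by move=> Hpq x; apply: conv_atC. Qed.

Lemma conv_at_single (p q : G -> R) x w a0 :
  (forall a, p a * q (x - a) != 0 -> a = a0) ->
  conv_at p q x w -> w = p a0 * q (x - a0).
Proof.
move=> only [s [us [Hs ->]]].
have term0 a : a != a0 -> p a * q (x - a) = 0.
  by move=> ne; apply/eqP; apply: contraNT ne => /only ->.
have [a0s|a0s] := boolP (a0 \in s).
  by rewrite (bigD1_seq a0) //= big1 ?addr0 // => a; apply: term0.
rewrite big1_seq => [|a /andP [_ a_s]]; last first.
  by apply: term0; apply: contraNneq a0s => <-.
by apply/esym/eqP; apply: contraNT a0s => /Hs.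
Qed.

Lemma conv_at_monom_l (p q : G -> R) s g y w :
  p =1 monom s g -> conv_at p q y w -> w = s * q (y - g).
Proof.
move=> Hp /(conv_at_single (a0 := g)); rewrite Hp /monom eqxx; apply=> a.
by rewrite Hp /monom; have [-> //|_] := eqVneq a g; rewrite mul0r eqxx.
Qed.

Lemma is_prod_monom_l s g (q : G -> R) :
  is_prod (monom s g) q (fun y => s * q (y - g)).
Proof.
move=> y; exists [:: g]; split=> //; split; last by rewrite big_seq1 /monom eqxx.
by move=> a; rewrite /monom inE; case: (a == g); rewrite ?mul0r ?eqxx.
Qed.

Lemma conv_at_neq0_term (p q : G -> R) x w :
  conv_at p q x w -> w != 0 -> exists a, p a * q (x - a) != 0.
Proof.
move=> [s [_ [_ ->]]].
have [/hasP [a _ ne]|/hasPn H] := boolP (has (fun a => p a * q (x - a) != 0) s).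
  by exists a.
by rewrite big1_seq ?eqxx // => a /andP [_ /H /negPn /eqP].
Qed.

Lemma monomial_supp (S : {pred R}) (p : G -> R) x y :
  is_monomial S p -> p x != 0 -> p y != 0 -> x = y.
Proof.
move=> [s [g [_ Hp]]]; rewrite !Hp.
have [-> _|_] := eqVneq x g; last by rewrite eqxx.
by have [->|_] := eqVneq y g; rewrite ?eqxx.
Qed.

Variables (S : {pred R}) (lt : rel G).
Hypotheses (S0 : 0 \in S)
  (SD : forall a b, a \in S -> b \in S -> a + b \in S)
  (SM : forall a b, a \in S -> b \in S -> a * b \in S)
  (Sred : forall a b, a \in S -> b \in S -> a + b = 0 -> a = 0).

(* t only serves to make the enumeration g, g + t, g + t, ... leave the
   support after its first point. *)
Lemma is_series_monom (p : G -> R) s g (t : G) :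
  t != 0 -> s \in S -> p =1 monom s g -> is_series S lt p.
Proof.
move=> tn0 sS Hp; split=> [x|]; first by rewrite Hp /monom; case: eqP.
exists (fun i => if i is 0%N then g else g + t); split=> [i|x].
  have gt_neq : (g + t == g) = false by rewrite -subr_eq0 addrC addKr (negbTE tn0).
  by rewrite /= Hp /monom gt_neq eqxx.
by rewrite Hp /monom; have [-> _|_] := eqVneq x g; [exists 0%N | rewrite eqxx].
Qed.

Lemma sum_in_S (T : eqType) (l : seq T) (F : T -> R) :
  (forall a, F a \in S) -> \sum_(a <- l) F a \in S.
Proof. by move=> FS; apply: (big_ind (fun x => x \in S)). Qed.

Lemma sum_in_S_eq0 (T : eqType) (l : seq T) (F : T -> R) :
  (forall a, F a \in S) -> \sum_(a <- l) F a = 0 -> forall a, a \in l -> F a = 0.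
Proof.
move=> FS; elim: l => [|b l IHl]; first by rewrite big_nil.
rewrite big_cons => sum0 a; have Fb0 := Sred (FS b) (sum_in_S l FS) sum0.
rewrite inE => /predU1P [->|al] //.
by apply: IHl al; move: sum0; rewrite Fb0 add0r.
Qed.

Lemma conv_at0_terms (p q : G -> R) x :
  (forall a, p a \in S) -> (forall b, q b \in S) ->
  conv_at p q x 0 -> forall a, p a * q (x - a) = 0.
Proof.
move=> Sp Sq [s [_ [Hs sum0]]] a; apply/eqP; apply: contraT => /[dup] /Hs a_s.
by rewrite (sum_in_S_eq0 (fun b => SM (Sp b) (Sq (x - b))) (esym sum0) a_s) eqxx.
Qed.

Lemma unit_terms_add_eq0 (u v : G -> R) :
  (forall a, u a \in S) -> (forall b, v b \in S) ->
  is_prod u v (@series_one R G) -> forall a b, u a * v b != 0 -> a + b = 0.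
Proof.
move=> Su Sv Huv a b; apply: contraNeq => nz; apply/eqP.
have uv0 : conv_at u v (a + b) 0 by have := Huv (a + b); rewrite /series_one (negbTE nz).
by have := conv_at0_terms Su Sv uv0 a; rewrite addrC addKr.
Qed.

Lemma series_unit_monomial (u : G -> R) : series_unit S lt u -> is_monomial S u.
Proof.
move=> [[Su _] [v [[Sv _] Huv]]].
have [a0 uv0] : exists a, u a * v (0 - a) != 0.
  by apply: conv_at_neq0_term (Huv 0) _; rewrite /series_one eqxx oner_neq0.
have va0 : v (0 - a0) != 0 by move: uv0; rewrite mulf_eq0 negb_or => /andP [].
exists (u a0), a0; split=> // y; have [->|ne] := eqVneq y a0 => //.
apply/eqP; apply: contraNT ne => uy.
have := unit_terms_add_eq0 Su Sv Huv (mulf_neq0 uy va0).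
by rewrite sub0r => /subr0_eq/eqP.
Qed.

Lemma series_unit_monom_sunit (p : G -> R) s g :
  p =1 monom s g -> series_unit S lt p -> sunit S s.
Proof.
move=> Hp [[Sp _] [v [[Sv _] Hpv]]].
have := conv_at_monom_l Hp (Hpv 0); rewrite /series_one eqxx => s_inv.
split; first by have := Sp g; rewrite Hp /monom eqxx.
split; last by exists (v (0 - g)).
by apply/eqP => s0; move: s_inv; rewrite s0 mul0r => /eqP; rewrite oner_eq0.
Qed.

Lemma series_unit_monom (p : G -> R) s g (t : G) :
  t != 0 -> p =1 monom s g -> sunit S s -> series_unit S lt p.
Proof.
move=> tn0 Hp [sS [_ [e [eS se]]]]; split; first exact: is_series_monom tn0 sS Hp.
exists (monom e (- g)); split; first exact: is_series_monom tn0 eS (frefl _).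
move=> x; have -> : @series_one R G x = s * monom e (- g) (x - g).
  rewrite /series_one /monom -[x - g == - g]subr_eq0 opprK subrK.
  by case: (x == 0); rewrite ?se ?mulr0.
exact: eq_conv_at (fsym Hp) (frefl _) (is_prod_monom_l _ _ _ x).
Qed.

Lemma series_factor_divisor (f : G -> R) d :
  d \in S -> d != 0 -> is_series S lt f -> (forall x, f x != 0 -> sdvd S d (f x)) ->
  exists2 h, is_series S lt h &
    is_prod (monom d 0) h f /\ forall x, (h x != 0) = (f x != 0).
Proof.
move=> dS dn0 [Sf [gf [gf_step gf_supp]]] dvd.
have quot x : exists e, (e \in S) && (f x == d * e).
  have [->|fx] := eqVneq (f x) 0; first by exists 0; rewrite S0 mulr0 eqxx.
  by have [e [eS [_ ->]]] := dvd x fx; exists e; rewrite eS eqxx.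
pose h x := xchoose (quot x).
have [hS fh] : (forall x, h x \in S) /\ (forall x, f x = d * h x).
  by split=> x; have /andP [? /eqP] := xchooseP (quot x).
have hf x : (h x != 0) = (f x != 0) by rewrite fh mulf_eq0 negb_or dn0.
exists h; last split=> //.
  by split=> //; exists gf; split=> [i|x]; rewrite !hf; [apply: gf_step | apply: gf_supp].
by move=> x; have := is_prod_monom_l d 0 h x; rewrite /= subr0 -fh.
Qed.

Lemma gcd_coeffs_sunit (f c : G -> R) s :
  one_in_gcd_coeffs S f -> series_nonzero f -> s \in S -> (forall b, c b \in S) ->
  (forall y, f y = s * c y) -> sunit S s.
Proof.
move=> gcd1 [x0 fx0] sS Sc fsc.
have sn0 : s != 0 by apply: contraNneq fx0 => s0; rewrite fsc s0 mul0r.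
apply: gcd1 => // x; rewrite fsc mulf_eq0 negb_or => /andP [_ cx].
by exists (c x).
Qed.

Lemma monomial_factor_unit (m q f : G -> R) s g (t : G) :
  t != 0 -> one_in_gcd_coeffs S f -> series_nonzero f -> is_series S lt q ->
  s \in S -> m =1 monom s g -> is_prod m q f -> series_unit S lt m.
Proof.
move=> tn0 gcd1 fnz [Sq _] sS Hm Hmq; apply: (series_unit_monom tn0 Hm).
apply: (gcd_coeffs_sunit gcd1 fnz sS (c := fun y => q (y - g))) => // y.
exact: conv_at_monom_l Hm (Hmq y).
Qed.

End MonomialSeries.

Theorem lemma4p1 (R : idomainType) (S : {pred R})
  (S0 : 0 \in S) (S1 : 1 \in S)
  (SD : forall a b, a \in S -> b \in S -> a + b \in S)
  (SM : forall a b, a \in S -> b \in S -> a * b \in S)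
  (Sred : forall a b, a \in S -> b \in S -> a + b = 0 -> a = 0)
  (G : zmodType) (lt : rel G)
  (lt_irr : forall a, ~~ lt a a)
  (lt_trans : forall a b c, lt a b -> lt b c -> lt a c)
  (lt_total : forall a b, a != b -> lt a b || lt b a)
  (lt_add : forall a b c, lt a b -> lt (a + c) (b + c))
  (G_tf : forall (g : G) (n : nat), (0 < n)%N -> g *+ n = 0 -> g = 0)
  (f : G -> R) (Hf : is_series S lt f)
  (Hsupp : exists x y, x != y /\ f x != 0 /\ f y != 0) :
  series_irreducible S lt f <-> monolithic S lt f /\ one_in_gcd_coeffs S f.
Proof.
have [x1 [y1 [x1y1 [fx1 fy1]]]] := Hsupp.
have t_neq0 : x1 - y1 != 0 by rewrite subr_eq0.
have not_monomial h : is_monomial S h -> h x1 != 0 -> h y1 != 0 -> False.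
  by move=> /monomial_supp Hh /Hh /[apply] /eqP; rewrite (negbTE x1y1).
have units_monomial := series_unit_monomial S0 SD SM Sred (lt := lt).
split=> [[fnz [_ firr]] | [[fnz fmono] gcd1]].
- split; first by split=> // p q Hp Hq /(firr _ _ Hp Hq) [] /units_monomial; auto.
  move=> d dS dn0 /(series_factor_divisor S0 dS dn0 Hf) [h Hh [Hdh hf]].
  have Hd := is_series_monom lt S0 t_neq0 dS (frefl (monom d 0)).
  have [|/units_monomial hm] := firr _ _ Hd Hh Hdh.
    exact: series_unit_monom_sunit.
  by case: (not_monomial h hm); rewrite hf.
- split=> //; split; first by move=> /units_monomial /not_monomial; apply.
  move=> p q Hp Hq Hpq.
  have [[s [g [sS Hm]]]|[s [g [sS Hm]]]] := fmono p q Hp Hq Hpq; [left|right].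
  + exact: monomial_factor_unit t_neq0 gcd1 fnz Hq sS Hm Hpq.
  + exact: monomial_factor_unit t_neq0 gcd1 fnz Hp sS Hm (is_prodC Hpq).
Qed.
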